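(* Let $(\hat{x}_i,\hat{a}_i,\hat{y}_i)$, $i=1,\dots,N$, be observed data points in $\mathbb{R}^n\times\{0,1\}\times\mathbb{R}$ with empirical distribution $\hat{\mathbb{P}}^N=\frac1N\sum_{i=1}^N\delta_{(\hat{x}_i,\hat{a}_i,\hat{y}_i)}$ and empirical marginals $\hat{p}^N_a=\frac1N\#\{i:\hat{a}_i=a\}$. Let $\alpha,\beta\ge0$, let $c((x,a,y),(x',a',y'))=\alpha\|x-x'\|+\infty\cdot|a-a'|+\beta|y-y'|$ (with $\infty\cdot0=0$), and $W_c^2(\mathbb{P},\mathbb{Q})=\inf_{\pi\in\Pi(\mathbb{P},\mathbb{Q})}\mathbb{E}_\pi[c^2]$. Let $\mathcal{F}_{\mathcal{R}}$ be a set of probability distributions on $\mathbb{R}^n\times\{0,1\}\times\mathbb{R}$ and $\mathcal{F}_{\mathcal{R}}(\hat{p}^N)=\{\mathbb{Q}\in\mathcal{F}_{\mathcal{R}}:\mathbb{Q}(A=a)=\hat{p}^N_a\ \forall a\in\{0,1\}\}$. Suppose some $\mathbb{Q}\in\mathcal{F}_{\mathcal{R}}$ satisfies $W_c^2(\hat{\mathbb{P}}^N,\mathbb{Q})<\infty$. Then $$\inf_{\mathbb{Q}\in\mathcal{F}_{\mathcal{R}}}W_c^2(\hat{\mathbb{P}}^N,\mathbb{Q})=\inf_{\mathbb{Q}\in\mathcal{F}_{\mathcal{R}}(\hat{p}^N)}W_c^2(\hat{\mathbb{P}}^N,\mathbb{Q}).$$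
   Context: $\|\cdot\|$ is the Euclidean norm; $\Pi(\mathbb{P},\mathbb{Q})$ is the set of couplings of $\mathbb{P}$ and $\mathbb{Q}$. In the paper, $\mathcal{F}_{\mathcal{R}}$ is the set of distributions relative to which a regressor $\mathcal{R}:\mathbb{R}^n\to\mathbb{R}$ is fair under a chosen fairness criterion. *)

From HB Require Import structures.
From mathcomp Require Import all_boot all_order all_algebra.
From mathcomp Require Import all_classical all_reals all_analysis.
Set Implicit Arguments. Unset Strict Implicit. Unset Printing Implicit Defensive.
Import Order.TTheory GRing.Theory Num.Theory.
Local Open Scope classical_set_scope.
Local Open Scope ring_scope.

(* Sample space R^n x {0,1} x R ; R^n is n.-tuple R with the product
   (= Borel) sigma-algebra provided by MathComp-Analysis. *)
Notation Z n R := (n.-tuple R * (bool * R))%type.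

Definition eucl_dist (R : realType) (n : nat) (x x' : n.-tuple R) : R :=
  Num.sqrt (\sum_(i < n) (tnth x i - tnth x' i) ^+ 2).

(* c((x,a,y),(x',a',y')) = alpha ||x-x'|| + oo*|a-a'| + beta |y-y'|,
   with oo * 0 = 0. *)
Definition cost (R : realType) (n : nat) (alpha beta : R) (z z' : Z n R)
  : \bar R :=
  if z.2.1 == z'.2.1
  then (alpha * eucl_dist z.1 z'.1 + beta * `|z.2.2 - z'.2.2|)%:E
  else +oo%E.

Definition coupling (R : realType) (n : nat) (P : set (Z n R) -> \bar R)
  (Q : probability (Z n R) R) (pi : probability (Z n R * Z n R)%type R) : Prop :=
  (forall A, measurable A -> pi (fst @^-1` A) = P A) /\
  (forall B, measurable B -> pi (snd @^-1` B) = Q B).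

Definition W2 (R : realType) (n : nat) (alpha beta : R)
  (P : set (Z n R) -> \bar R) (Q : probability (Z n R) R) : \bar R :=
  ereal_inf [set v | exists pi : probability (Z n R * Z n R)%type R,
     coupling P Q pi /\
     v = (\int[pi]_w (cost alpha beta w.1 w.2 * cost alpha beta w.1 w.2))%E].

Definition empirical (R : realType) (n N : nat) (data : 'I_N -> Z n R)
  (A : set (Z n R)) : \bar R :=
  ((N%:R)^-1)%:E * (\sum_(i < N) \d_(data i) A)%E.

Definition emp_marg (R : realType) (n N : nat) (data : 'I_N -> Z n R)
  (a : bool) : R :=
  (#|[set i : 'I_N | (data i).2.1 == a]|)%:R / N%:R.

(** A coupling of finite expected squared cost cannot move any mass between
    the two values of the sensitive attribute, since such moves cost [+oo]:
    the set of pairs with different labels is null.  Hence every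
    distribution at finite distance from the empirical one already has the
    empirical marginals of the attribute, and restricting the infimum to
    such distributions changes nothing. *)
From HB Require Import structures.
From mathcomp Require Import all_boot all_order all_algebra.
From mathcomp Require Import all_classical all_reals all_analysis.
From mathcomp Require Import measurable_realfun.
Import Order.TTheory GRing.Theory Num.Theory.
Local Open Scope classical_set_scope.
Local Open Scope ring_scope.

Section null_sets.
Local Open Scope ereal_scope.
Context {d} {T : measurableType d} {R : realType}.
Variable mu : {measure set T -> \bar R}.

Lemma measure_eq_null_setD (E F : set T) : measurable E -> measurable F ->
  mu (E `\` F) = 0 -> mu (F `\` E) = 0 -> mu E = mu F.
Proof.
move=> mE mF EF0 FE0.
rewrite -(measureU0 mE (measurableD mF mE) FE0).
rewrite -(measureU0 mF (measurableD mE mF) EF0).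
by rewrite !setUDr !setDv !setD0 setUC.
Qed.

Import HBNNSimple.

Lemma le_integral_nnsfun (f : T -> \bar R) (h : {nnsfun T >-> R}) :
  (forall x, 0 <= f x) -> (forall x, (h x)%:E <= f x) ->
  \int[mu]_x (h x)%:E <= \int[mu]_x f x.
Proof.
move=> f0 hf; rewrite integralT_nnsfun ge0_integralTE //.
by apply: ereal_sup_ubound; exists h.
Qed.

(* [f] need not be measurable: it is compared with a simple function directly,
   not through [ge0_le_integral]. *)
Lemma le_integral_scale_indic (f : T -> \bar R) (S : set T) (k : R) :
  measurable S -> (0 <= k)%R -> (forall x, 0 <= f x) ->
  (forall x, S x -> k%:E <= f x) -> k%:E * mu S <= \int[mu]_x f x.
Proof.
move=> mS k0 f0 fS.
have <- : \int[mu]_x ((k * \1_S x)%R)%:E = k%:E * mu S.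
  under eq_integral do rewrite EFinM.
  rewrite ge0_integralZl ?lee_fin //.
    by rewrite integral_indic // setIT.
  exact/measurable_EFinP/measurable_indic.
apply: (le_integral_nnsfun _ (scale_nnsfun (indic_nnsfun R mS) k0) f0) => x /=.
rewrite mindicE /indic; case: (boolP (x \in S)) => [/set_mem /fS|_].
  by rewrite mulr1.
by rewrite mulr0.
Qed.

Lemma integral_lty_null_set (f : T -> \bar R) (S : set T) :
  measurable S -> (forall x, 0 <= f x) -> (forall x, S x -> f x = +oo) ->
  \int[mu]_x f x < +oo -> mu S = 0.
Proof.
move=> mS f0 fS If.
have lower k : (0 <= k)%R -> k%:E * mu S <= \int[mu]_x f x.
  by move=> k0; apply: le_integral_scale_indic => // x /fS ->; exact: leey.
have /fineK I_fin : \int[mu]_x f x \is a fin_num.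
  by rewrite ge0_fin_numE // integral_ge0.
have /fineK mS_fin : mu S \is a fin_num.
  rewrite ge0_fin_numE // (le_lt_trans _ If) // -[mu S]mul1e.
  exact: lower.
set I := fine (\int[mu]_x f x) in I_fin; set s := fine (mu S) in mS_fin.
have I0 : (0 <= I)%R by rewrite -lee_fin I_fin integral_ge0.
apply/eqP; rewrite eq_le measure_ge0 andbT -mS_fin lee_fin leNgt.
apply/negP => s_gt0.
(* the mass [s] weighted by [(I + 1) / s] would exceed the integral [I] *)
have := lower ((I + 1) / s)%R.
rewrite divr_ge0 ?addr_ge0 ?(ltW s_gt0) // => /(_ isT).
rewrite -mS_fin -I_fin -EFinM mulfVK ?gt_eqF // lee_fin.
by rewrite leNgt ltrDl ltr01.
Qed.

End null_sets.

Lemma cost_ge0 (R : realType) (n : nat) (alpha beta : R) (z z' : Z n R) :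
  0 <= alpha -> 0 <= beta -> (0 <= cost alpha beta z z')%E.
Proof.
move=> a0 b0; rewrite /cost; case: ifP => // _.
by rewrite lee_fin addr_ge0 // mulr_ge0 // sqrtr_ge0.
Qed.

Lemma cost_label_neq (R : realType) (n : nat) (alpha beta : R) (z z' : Z n R) :
  z.2.1 != z'.2.1 -> cost alpha beta z z' = +oo%E.
Proof. by rewrite /cost => /negbTE ->. Qed.

Definition label_event (R : realType) (n : nat) (a : bool) : set (Z n R) :=
  [set z | z.2.1 = a].

Lemma measurable_label_event (R : realType) (n : nat) (a : bool) :
  measurable (label_event R n a).
Proof.
have mA : measurable (fst @^-1` [set a] : set (bool * R)).
  by rewrite -[X in measurable X]setTI; exact: measurable_fst.
by rewrite -[X in measurable X]setTI; exact: (measurable_snd measurableT _ mA).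
Qed.

Lemma empirical_label_event (R : realType) (n N : nat)
    (data : 'I_N -> Z n R) (a : bool) :
  empirical data (label_event R n a) = (emp_marg data a)%:E.
Proof.
rewrite /empirical /emp_marg; under eq_bigr do rewrite diracE.
rewrite sumEFin -EFinM mulrC; congr (_ * _)%:E.
rewrite (eq_bigr (fun i => if (data i).2.1 == a then 1 else 0)); last first.
  by move=> i _; case: eqP => ?; [rewrite mem_set | rewrite memNset].
rewrite -big_mkcond sumr_const; congr _%:R; apply: eq_card => i.
by rewrite !unfold_in /= asboolb.
Qed.

Section coupling_label.
Context {R : realType} {n : nat} {alpha beta : R}.
Hypotheses (alpha0 : 0 <= alpha) (beta0 : 0 <= beta).

Let sq_cost (w : Z n R * Z n R) : \bar R :=
  (cost alpha beta w.1 w.2 * cost alpha beta w.1 w.2)%E.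

Lemma coupling_label_event (P : set (Z n R) -> \bar R)
    (Q : probability (Z n R) R) (pi : probability (Z n R * Z n R)%type R)
    (a : bool) :
  coupling P Q pi -> (\int[pi]_w sq_cost w < +oo)%E ->
  Q (label_event R n a) = P (label_event R n a).
Proof.
move=> [piP piQ] Ifin.
have mL := measurable_label_event R n a.
have mE : measurable (fst @^-1` label_event R n a : set (Z n R * Z n R)).
  by rewrite -[X in measurable X]setTI; exact: measurable_fst.
have mF : measurable (snd @^-1` label_event R n a : set (Z n R * Z n R)).
  by rewrite -[X in measurable X]setTI; exact: measurable_snd.
have sq_cost0 w : (0 <= sq_cost w)%E by rewrite mule_ge0 ?cost_ge0.
have label_change_null (A B : set (Z n R * Z n R)) :
    measurable A -> measurable B ->
    (forall w, A w -> ~ B w -> w.1.2.1 != w.2.2.1) -> pi (A `\` B) = 0%E.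
  move=> mA mB AB.
  apply: (integral_lty_null_set pi _ _ (measurableD mA mB) sq_cost0) => //.
  by move=> w [Aw nBw]; rewrite /sq_cost cost_label_neq ?mulyy //; exact: AB.
rewrite -piQ // -piP //; apply: measure_eq_null_setD => //.
  by apply: label_change_null => // w /= -> ?; apply/eqP.
by apply: label_change_null => // w /= -> ?; apply/eqP => /esym.
Qed.

Lemma W2_lty_label_event (P : set (Z n R) -> \bar R)
    (Q : probability (Z n R) R) (a : bool) :
  (W2 alpha beta P Q < +oo)%E -> Q (label_event R n a) = P (label_event R n a).
Proof.
by move=> /ereal_inf_lt[_ [pi [piPQ ->]]]; exact: coupling_label_event.
Qed.

End coupling_label.

Theorem theorem1 (R : realType) (n N : nat) (hN : (0 < N)%N)
  (data : 'I_N -> Z n R) (alpha beta : R) (halpha : 0 <= alpha)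
  (hbeta : 0 <= beta) (F : set (probability (Z n R) R))
  (hfin : exists Q, F Q /\ (W2 alpha beta (empirical data) Q < +oo)%E) :
  ereal_inf [set W2 alpha beta (empirical data) Q | Q in F] =
  ereal_inf [set W2 alpha beta (empirical data) Q | Q in
    [set Q | F Q /\ forall a : bool,
       Q [set z : Z n R | z.2.1 = a] = (emp_marg data a)%:E]].
Proof.
apply/eqP; rewrite eq_le; apply/andP; split.
  by apply: ereal_inf_le_tmp => _ [Q [FQ _] <-]; exists Q.
apply/ereal_infP => _ [Q FQ <-].
have [W_fin|W_inf] := ltP (W2 alpha beta (empirical data) Q) +oo%E; last first.
  exact: le_trans (leey _) W_inf.
apply: ereal_inf_lbound; exists Q => //; split => // a.
rewrite -empirical_label_event.
by rewrite -(W2_lty_label_event halpha hbeta _ _ a W_fin).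
Qed.
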